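(* Let $A\in\mathbb{R}^{n\times n}$, $B\in\mathbb{R}^n$ with $(A,B)$ controllable, $n\ge2$, and let $\mathrm{an}_k\in\mathbb{R}^{(n-k)\times(n-k+1)}$, $k=1,\dots,n-1$, be full row rank matrices with $\mathrm{an}_kB_{k-1}=0$, where $B_0=B$ and $B_k=\mathrm{an}_k\cdots\mathrm{an}_1A^kB$. Put $A_{t,i}=\mathrm{an}_i\cdots\mathrm{an}_1A^i$ ($i=1,\dots,n-1$). Let $\Phi(s)=s^n+p_1s^{n-1}+\dots+p_{n-1}s+p_n$ be a real polynomial and define $$K_0=p_nI_n,\qquad K_i=\mathrm{an}_iK_{i-1}+p_{n-i}A_{t,i}\quad(i=1,\dots,n-1),\qquad K_n=K_{n-1}+A_{t,n-1}A .$$ Then $B_{n-1}=A_{t,n-1}B\neq0$ and the row vector $K=\frac{1}{B_{n-1}}K_n$ satisfies $\det(sI-A+BK)=\Phi(s)$. *)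

From HB Require Import structures.
From mathcomp Require Import all_boot all_order all_algebra.
From mathcomp Require Import reals.
Set Implicit Arguments. Unset Strict Implicit. Unset Printing Implicit Defensive.
Import Order.TTheory GRing.Theory Num.Theory.
Local Open Scope ring_scope.

Definition ctrb_mx (R : nzRingType) (n : nat) (A : 'M[R]_n) (B : 'cV[R]_n) : 'M[R]_n :=
  \matrix_(i < n, j < n) (A ^+ j *m B) i 0.

Definition controllable (R : fieldType) (n : nat) (A : 'M[R]_n) (B : 'cV[R]_n) : Prop :=
  \rank (ctrb_mx A B) = n.

(* Convention: the paper's an_k (k = 1..n-1), of size (n-k) x (n-k+1),
   is [an (k-1)] here, of size (n - k) x (n - (k-1)). *)

Fixpoint anprod (R : nzRingType) (n : nat)
  (an : forall k : nat, 'M[R]_(n - k.+1, n - k)) (i : nat) : 'M[R]_(n - i, n) :=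
  match i return 'M[R]_(n - i, n) with
  | 0 => castmx (esym (subn0 n), erefl n) (1%:M : 'M[R]_n)
  | i'.+1 => an i' *m anprod an i'
  end.

Definition At (R : nzRingType) (n : nat) (A : 'M[R]_n)
  (an : forall k : nat, 'M[R]_(n - k.+1, n - k)) (i : nat) : 'M[R]_(n - i, n) :=
  anprod an i *m A ^+ i.

Definition Bk (R : nzRingType) (n : nat) (A : 'M[R]_n) (B : 'cV[R]_n)
  (an : forall k : nat, 'M[R]_(n - k.+1, n - k)) (k : nat) : 'M[R]_(n - k, 1) :=
  anprod an k *m (A ^+ k *m B).

(* K_0 = p_n I_n, K_i = an_i K_{i-1} + p_{n-i} A_{t,i}, where
   Phi = s^n + p_1 s^(n-1) + ... + p_n, i.e. p_j = Phi`_(n-j), so p_{n-i} = Phi`_i. *)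
Fixpoint Kseq (R : nzRingType) (n : nat) (A : 'M[R]_n)
  (an : forall k : nat, 'M[R]_(n - k.+1, n - k)) (Phi : {poly R}) (i : nat)
  : 'M[R]_(n - i, n) :=
  match i return 'M[R]_(n - i, n) with
  | 0 => castmx (esym (subn0 n), erefl n) ((Phi`_0)%:M : 'M[R]_n)
  | i'.+1 => an i' *m Kseq A an Phi i' + Phi`_(i'.+1) *: At A an i'.+1
  end.

Lemma last_rows_eq1 (m : nat) : (m.+2 - m.+1 = 1)%N.
Proof. exact: subSnn. Qed.

Definition Blast (R : nzRingType) (m : nat) (A : 'M[R]_m.+2) (B : 'cV[R]_m.+2)
  (an : forall k : nat, 'M[R]_(m.+2 - k.+1, m.+2 - k)) : R :=
  (castmx (last_rows_eq1 m, erefl 1%N) (Bk A B an m.+1)) 0 0.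

Definition Kn (R : nzRingType) (m : nat) (A : 'M[R]_m.+2)
  (an : forall k : nat, 'M[R]_(m.+2 - k.+1, m.+2 - k)) (Phi : {poly R}) : 'rV[R]_m.+2 :=
  castmx (last_rows_eq1 m, erefl m.+2) (Kseq A an Phi m.+1 + At A an m.+1 *m A).

Definition Kgain (R : fieldType) (m : nat) (A : 'M[R]_m.+2) (B : 'cV[R]_m.+2)
  (an : forall k : nat, 'M[R]_(m.+2 - k.+1, m.+2 - k)) (Phi : {poly R}) : 'rV[R]_m.+2 :=
  (Blast A B an)^-1 *: Kn A an Phi.

From HB Require Import structures.
From mathcomp Require Import all_boot all_order all_algebra.
From mathcomp Require Import reals.
From mathcomp Require Import zify.

Set Implicit Arguments.
Unset Strict Implicit.
Unset Printing Implicit Defensive.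
Import Order.TTheory GRing.Theory Num.Theory.
Local Open Scope ring_scope.

(* The row vector p = an_{n-1} ... an_1 kills B, AB, ..., A^(n-2) B, so by
   controllability and row-freeness b = p A^(n-1) B is nonzero; the recursion
   for K_i unrolls to K_n = p Phi(A), hence K = q Phi(A) with q = p / b, and
   q A^j B = [j = n-1] for j < n.  This is Ackermann's formula: such a q
   satisfies q (A - BK)^j = q A^j for j < n, so q Phi(A - BK) = 0, and q
   annihilates no nonzero polynomial of degree < n evaluated at A; applied to
   char_poly (A - BK) - Phi together with Cayley-Hamilton this gives the claim. *)

Lemma castmx_mulmxl (R : nzRingType) m m' n p (e : m = m')
    (X : 'M[R]_(m, n)) (Y : 'M[R]_(n, p)) :
  castmx (e, erefl p) (X *m Y) = castmx (e, erefl n) X *m Y.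
Proof. by case: m' / e; rewrite !castmx_id. Qed.

Lemma horner_mx_sum (R : comNzRingType) n (A : 'M[R]_n.+1) (p : {poly R}) :
  horner_mx A p = \sum_(i < size p) p`_i *: A ^+ i.
Proof.
rewrite -{1}[p]coefK poly_def linear_sum; apply: eq_bigr => i _.
by rewrite linearZ rmorphXn /= horner_mx_X.
Qed.

Lemma size_sub_monic (R : nzRingType) (p q : {poly R}) :
  p \is monic -> q \is monic -> size p = size q -> (size (p - q)%R < size p)%N.
Proof.
move=> mp mq spq; have sp : size p = (size p).-1.+1.
  by rewrite prednK // size_poly_gt0 monic_neq0.
rewrite sp ltnS; apply/leq_sizeP => j; rewrite leq_eqVlt => /orP[/eqP <-|ltj].
  move/monicP: mp; move/monicP: mq; rewrite /lead_coef -spq coefB => -> ->.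
  by rewrite subrr.
by rewrite coefB !nth_default ?subrr // -?spq sp.
Qed.

Section Ackermann.

Variables (R : comNzRingType) (n : nat) (A : 'M[R]_n.+1) (B : 'cV[R]_n.+1).
Variable q : 'rV[R]_n.+1.
Hypothesis qAB_eq0 : forall j, (j < n)%N -> q *m (A ^+ j *m B) = 0.
Hypothesis qAB_eq1 : q *m (A ^+ n *m B) = 1%:M.

Lemma row_exp_feedback (K : 'rV[R]_n.+1) j :
  (j <= n)%N -> q *m (A - B *m K) ^+ j = q *m A ^+ j.
Proof.
elim: j => [|j IHj] ltjn; first by rewrite !expr0.
rewrite !exprSr -!mulmxE !mulmxA IHj ?(ltnW ltjn) // mulmxBr !mulmxA.
by rewrite -(mulmxA q (A ^+ j) B) qAB_eq0 // mul0mx subr0.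
Qed.

Lemma row_horner_feedback (K : 'rV[R]_n.+1) (d : {poly R}) :
  (size d <= n.+1)%N -> q *m horner_mx (A - B *m K) d = q *m horner_mx A d.
Proof.
move=> sd; rewrite !horner_mx_sum !mulmx_sumr; apply: eq_bigr => i _.
by rewrite -!scalemxAr row_exp_feedback // -ltnS (leq_trans (ltn_ord i)).
Qed.

Lemma row_horner_eq0 (d : {poly R}) :
  (size d <= n.+1)%N -> q *m horner_mx A d = 0 -> d = 0.
Proof.
move=> sd qd0; apply/eqP; apply: contraT => d_neq0.
have sdk : size d = (size d).-1.+1 by rewrite prednK // size_poly_gt0.
set k := (size d).-1 in sdk; have lekn : (k <= n)%N by rewrite -ltnS -sdk.
have qAAB i : q *m A ^+ i *m (A ^+ (n - k) *m B) = q *m (A ^+ (i + (n - k)) *m B).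
  by rewrite exprD -mulmxE !mulmxA.
have : q *m horner_mx A d *m (A ^+ (n - k) *m B) = (lead_coef d)%:M.
  rewrite horner_mx_sum mulmx_sumr mulmx_suml sdk big_ord_recr /= big1 ?add0r.
    by rewrite -scalemxAr -scalemxAl qAAB subnKC // qAB_eq1 scalemx1 /lead_coef sdk.
  move=> i _; rewrite -scalemxAr -scalemxAl qAAB qAB_eq0 ?scaler0 //.
  by have := ltn_ord i; lia.
rewrite qd0 mul0mx => /matrixP/(_ 0 0); rewrite !mxE /= mulr1n.
by move/esym/eqP; rewrite lead_coef_eq0 (negPf d_neq0).
Qed.

Variable Phi : {poly R}.
Hypotheses (Phi_monic : Phi \is monic) (size_Phi : size Phi = n.+2).

Let K := q *m horner_mx A Phi.

(* q (A - BK)^(n+1) = q A^(n+1) - K cancels the top term of q Phi(A) = K. *)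
Lemma row_horner_Ackermann : q *m horner_mx (A - B *m K) Phi = 0.
Proof.
have size_low : (size (Phi - 'X^(n.+1))%R <= n.+1)%N.
  by rewrite -ltnS -size_Phi size_sub_monic ?monicXn ?size_polyXn.
have top : q *m (A - B *m K) ^+ n.+1 = q *m A ^+ n.+1 - K.
  rewrite exprSr -mulmxE mulmxA row_exp_feedback // mulmxBr mulmxA.
  by rewrite -(mulmxA q _ B) qAB_eq1 mul1mx [A ^+ n.+1]exprSr -mulmxE mulmxA.
rewrite -[Phi](subrK 'X^(n.+1)) rmorphD mulmxDr row_horner_feedback //.
rewrite !rmorphB mulmxBr !rmorphXn /= !horner_mx_X top -/K.
by rewrite addrA subrK subrr.
Qed.

Theorem char_poly_Ackermann : char_poly (A - B *m K) = Phi.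
Proof.
have size_diff : (size (char_poly (A - B *m K) - Phi)%R <= n.+1)%N.
  rewrite -ltnS -(size_char_poly (A - B *m K)).
  by rewrite size_sub_monic ?char_poly_monic ?size_char_poly.
apply/eqP; rewrite -subr_eq0; apply/eqP/row_horner_eq0 => //.
rewrite -(row_horner_feedback K) // rmorphB /= Cayley_Hamilton.
by rewrite mulmxBr row_horner_Ackermann mulmx0 subr0.
Qed.

End Ackermann.

Lemma mulmx_ctrb_mx (R : nzRingType) n k (A : 'M[R]_n) (B : 'cV[R]_n)
    (P : 'M[R]_(k, n)) i j :
  (P *m ctrb_mx A B) i j = (P *m (A ^+ j *m B)) i 0.
Proof. by rewrite !mxE; apply: eq_bigr => l _; rewrite mxE. Qed.

Lemma controllable_mulmx_eq0 (R : fieldType) n k (A : 'M[R]_n) (B : 'cV[R]_n)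
    (P : 'M[R]_(k, n)) :
  controllable A B -> (forall j : 'I_n, P *m (A ^+ j *m B) = 0) -> P = 0.
Proof.
move=> ctrl PAB0.
have free_ctrb : row_free (ctrb_mx A B) by rewrite /row_free ctrl.
apply/eqP; rewrite -(mulmx_free_eq0 _ free_ctrb).
by apply/eqP/matrixP => i j; rewrite mulmx_ctrb_mx PAB0 !mxE.
Qed.

Lemma anprod_mulmx_eq0 (R : nzRingType) n (A : 'M[R]_n) (B : 'cV[R]_n)
    (an : forall k, 'M[R]_(n - k.+1, n - k)) N :
  (forall k, (k < N)%N -> an k *m Bk A B an k = 0) ->
  forall i j, (j < i <= N)%N -> anprod an i *m (A ^+ j *m B) = 0.
Proof.
move=> ann; elim=> [//|i IHi] j /andP[ltji leiN] /=.
rewrite -mulmxA; move: ltji; rewrite ltnS leq_eqVlt => /orP[/eqP ->|ltji].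
  exact: ann.
by rewrite IHi ?mulmx0 // ltji ltnW.
Qed.

Lemma row_free_anprod (R : fieldType) n (an : forall k, 'M[R]_(n - k.+1, n - k)) N :
  (forall k, (k < N)%N -> row_free (an k)) ->
  forall i, (i <= N)%N -> row_free (anprod an i).
Proof.
move=> free_an; elim=> [_|i IHi leiN] /=.
  by rewrite row_free_castmx row_free_unit unitmx1.
by rewrite /row_free mxrankMfree ?IHi ?(ltnW leiN) //; exact: free_an.
Qed.

Lemma Kseq_horner (R : comNzRingType) n (A : 'M[R]_n)
    (an : forall k, 'M[R]_(n - k.+1, n - k)) (Phi : {poly R}) i :
  Kseq A an Phi i = anprod an i *m \sum_(j < i.+1) Phi`_j *: A ^+ j.
Proof.
elim: i => [|i IHi] /=.
  by rewrite -castmx_mulmxl big_ord1 expr0 mul1mx scalemx1.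
by rewrite IHi [in RHS]big_ord_recr /= mulmxDr !mulmxA scalemxAr.
Qed.

Definition an_row (R : nzRingType) m (an : forall k, 'M[R]_(m.+2 - k.+1, m.+2 - k)) :
  'rV[R]_m.+2 := castmx (last_rows_eq1 m, erefl m.+2) (anprod an m.+1).

Section LastRow.

Variables (R : fieldType) (m : nat) (A : 'M[R]_m.+2) (B : 'cV[R]_m.+2).
Variable an : forall k, 'M[R]_(m.+2 - k.+1, m.+2 - k).

Lemma Blast_an_row : Blast A B an = (an_row an *m (A ^+ m.+1 *m B)) 0 0.
Proof. by rewrite /Blast /Bk castmx_mulmxl. Qed.

Lemma Kn_an_row (Phi : {poly R}) :
  Phi \is monic -> size Phi = m.+3 -> Kn A an Phi = an_row an *m horner_mx A Phi.
Proof.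
move=> /monicP Phi_monic size_Phi.
rewrite /Kn Kseq_horner /At -mulmxA -mulmxDr castmx_mulmxl horner_mx_sum size_Phi.
have lead1 : Phi`_m.+2 = 1 by rewrite -Phi_monic /lead_coef size_Phi.
by rewrite [in RHS]big_ord_recr /= lead1 scale1r [A ^+ m.+2]exprSr -mulmxE.
Qed.

Hypothesis ann : forall k, (k < m.+1)%N -> an k *m Bk A B an k = 0.

Lemma an_row_mulmx_eq0 j : (j < m.+1)%N -> an_row an *m (A ^+ j *m B) = 0.
Proof.
move=> ltjm; rewrite /an_row -castmx_mulmxl (anprod_mulmx_eq0 ann) ?leqnn ?ltjm //.
by apply/matrixP => i k; rewrite castmxE !mxE.
Qed.

Lemma Blast_neq0 :
  controllable A B -> (forall k, (k < m.+1)%N -> row_free (an k)) ->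
  Blast A B an != 0.
Proof.
move=> ctrl free_an; have : row_free (an_row an).
  by rewrite /an_row row_free_castmx (row_free_anprod free_an).
apply: contraTneq; rewrite Blast_an_row => b0.
rewrite (controllable_mulmx_eq0 ctrl (P := an_row an)) => [|j].
  by rewrite /row_free mxrank0.
have := ltn_ord j; rewrite ltnS leq_eqVlt => /orP[/eqP jE|].
  by apply/matrixP => i k; rewrite !ord1 jE b0 mxE.
exact: an_row_mulmx_eq0.
Qed.

End LastRow.

Theorem mainTheorem14 (R : realType) (m : nat) (A : 'M[R]_m.+2) (B : 'cV[R]_m.+2)
  (an : forall k : nat, 'M[R]_(m.+2 - k.+1, m.+2 - k)) (Phi : {poly R}) :
  controllable A B ->
  (forall k : nat, (k < m.+1)%N -> row_free (an k)) ->
  (forall k : nat, (k < m.+1)%N -> an k *m Bk A B an k = 0) ->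
  Phi \is monic -> size Phi = m.+3 ->
  [/\ Bk A B an m.+1 = At A an m.+1 *m B,
      Blast A B an != 0
    & char_poly (A - B *m Kgain A B an Phi) = Phi].
Proof.
move=> ctrl free_an ann Phi_monic size_Phi.
have b_neq0 := Blast_neq0 ann ctrl free_an.
split=> //; first by rewrite /Bk /At mulmxA.
have -> : Kgain A B an Phi = ((Blast A B an)^-1 *: an_row an) *m horner_mx A Phi.
  by rewrite /Kgain Kn_an_row // scalemxAl.
apply: char_poly_Ackermann => // [j ltjm|].
  by rewrite -scalemxAl an_row_mulmx_eq0 ?scaler0.
apply/matrixP => i j; rewrite !ord1 -scalemxAl [LHS]mxE -Blast_an_row.
by rewrite mulVf // mxE eqxx.
Qed.
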